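(* Let $\mathcal M$ be a countable transitive model of $\mathsf{ZFC}'$ and let $\mathbb P\in\mathcal M$ be a forcing by Silver trees. Then there exists a countable forcing by Silver trees $\mathbb Q$ such that $\mathbb P\sqsubset_{\mathcal M}\mathbb Q$.
   Context: $\mathsf{ZFC}'$ is ZFC without the Power Set axiom, plus the axiom asserting that $\mathcal P(\omega)$ exists. $2^{<\omega}$ is the set of finite binary strings. A set $T\subseteq 2^{<\omega}$ is a Silver tree if there are strings $u_0,u_1,\dots$ such that $T$ consists exactly of all strings $u_0{}^\frown i_0{}^\frown\cdots{}^\frown u_m{}^\frown i_m$ ($m<\omega$, $i_k\in\{0,1\}$) and all their initial segments; $[T]\subseteq 2^\omega$ is the set of branches; $T\restriction u=\{t\in T:u\subseteq t\text{ or }t\subseteq u\}$. Actions of strings $\sigma$ on reals ($(\sigma\cdot x)(k)=x(k)+\sigma(k)\bmod2$ for $k<|\sigma|$, else $x(k)$) and on strings ($(\sigma\cdot t)(j)=t(j)+\sigma(j)\bmod 2$ for $j<\min(|\sigma|,|t|)$, else $t(j)$); $\sigma\cdot T=\{\sigma\cdot t:t\in T\}$. A forcing by Silver trees is a set of Silver trees closed under $T\mapsto T\restriction u$ ($u\in T$) and $T\mapsto\sigma\cdot T$, ordered by inclusion. For continuous $f:2^\omega\to2^\omega$, its code is $\langle K_{k,i}:k<\omega,i=0,1\rangle$ where $K_{k,i}$ is the set of $\subseteq$-minimal strings $s$ with $f(x)(k)=i$ for all $x\supset s$. $f$ is regular on $T_0\in\mathbb P$ inside $\mathbb P$ if there are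 no $T'\in\mathbb P$, $T'\subseteq T_0$, and $\sigma$ with $f(x)=\sigma\cdot x$ for all $x\in[T']$. $\mathbb P\sqsubset_{\mathcal M}\mathbb Q$ means: (A) $\mathbb Q$ is dense in $\mathbb Q\cup\mathbb P$; (B) if $D\in\mathcal M$, $D\subseteq\mathbb P$ is pre-dense in $\mathbb P$ and $U\in\mathbb Q$, then $U\subseteq\bigcup D'$ for some finite $D'\subseteq D$; (C) if $T_0\in\mathbb P$, $f$ is continuous with code in $\mathcal M$ and regular on $T_0$ inside $\mathbb P$, and $U,V\in\mathbb Q$, $U\subseteq T_0$, then $[V]\cap f[[U]]=\emptyset$. *)

From Stdlib Require Import List Arith Bool.
Import ListNotations.

Inductive form : Type :=
| FIn  : nat -> nat -> form
| FEq  : nat -> nat -> form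
| FNot : form -> form
| FAnd : form -> form -> form
| FOr  : form -> form -> form
| FImp : form -> form -> form
| FAll : nat -> form -> form
| FEx  : nat -> form -> form.

Definition FIff (a b : form) : form := FAnd (FImp a b) (FImp b a).

Fixpoint free_in (v : nat) (p : form) : Prop :=
  match p with
  | FIn x y | FEq x y => v = x \/ v = y
  | FNot a => free_in v a
  | FAnd a b | FOr a b | FImp a b => free_in v a \/ free_in v b
  | FAll x a | FEx x a => v <> x /\ free_in v a
  end.

Record structure : Type := { carrier : Type; elem : carrier -> carrier -> Prop }.

Definition upd {A : Type} (e : nat -> A) (x : nat) (a : A) : nat -> A :=
  fun y => if Nat.eqb y x then a else e y.

Fixpoint sat (M : structure) (e : nat -> carrier M) (p : form) : Prop :=
  match p with
  | FIn x y => elem M (e x) (e y)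
  | FEq x y => e x = e y
  | FNot a => ~ sat M e a
  | FAnd a b => sat M e a /\ sat M e b
  | FOr a b => sat M e a \/ sat M e b
  | FImp a b => sat M e a -> sat M e b
  | FAll x a => forall c, sat M (upd e x c) a
  | FEx x a => exists c, sat M (upd e x c) a
  end.

Definition f_empty (e z : nat) : form := FAll z (FNot (FIn z e)).
Definition f_succ (s y z : nat) : form :=
  FAll z (FIff (FIn z s) (FOr (FIn z y) (FEq z y))).
Definition f_inductive (I e y s z : nat) : form :=
  FAnd (FEx e (FAnd (FIn e I) (f_empty e z)))
       (FAll y (FImp (FIn y I) (FEx s (FAnd (FIn s I) (f_succ s y z))))).
Definition f_upair (z x y t : nat) : form :=
  FAll t (FIff (FIn t z) (FOr (FEq t x) (FEq t y))).
Definition f_opair (p x y u v t : nat) : form :=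
  FEx u (FEx v (FAnd (f_upair u x x t) (FAnd (f_upair v x y t) (f_upair p u v t)))).
Definition f_rel (R x y : nat) : form :=
  FEx 20 (FAnd (FIn 20 R) (f_opair 20 x y 21 22 23)).

(* R (var 1) is a strict well-ordering of A (var 0) *)
Definition f_wellorders : form :=
  FAnd (FAll 10 (FImp (FIn 10 0) (FNot (f_rel 1 10 10))))
 (FAnd (FAll 10 (FAll 11 (FAll 12 (FImp (FAnd (FIn 10 0) (FAnd (FIn 11 0) (FIn 12 0)))
          (FImp (FAnd (f_rel 1 10 11) (f_rel 1 11 12)) (f_rel 1 10 12))))))
 (FAnd (FAll 10 (FAll 11 (FImp (FAnd (FIn 10 0) (FIn 11 0))
          (FOr (f_rel 1 10 11) (FOr (FEq 10 11) (f_rel 1 11 10))))))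
       (FAll 13 (FImp (FAnd (FAll 10 (FImp (FIn 10 13) (FIn 10 0))) (FEx 10 (FIn 10 13)))
          (FEx 14 (FAnd (FIn 14 13) (FAll 10 (FImp (FIn 10 13) (FNot (f_rel 1 10 14)))))))))).

(* w (var 0) is omega: the least inductive set *)
Definition f_is_omega : form :=
  FAnd (f_inductive 0 1 2 3 4)
       (FAll 5 (FImp (f_inductive 5 1 2 3 4) (FAll 6 (FImp (FIn 6 0) (FIn 6 5))))).

(* The axioms of ZFC' = ZFC - Power Set + "P(omega) exists".
   Free variables of an axiom are parameters: a structure satisfies an
   axiom when it satisfies it under every assignment (universal closure). *)
Inductive ZFCprime : form -> Prop :=
| ax_ext : ZFCprime
    (FAll 0 (FAll 1 (FImp (FAll 2 (FIff (FIn 2 0) (FIn 2 1))) (FEq 0 1))))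
| ax_found : ZFCprime
    (FAll 0 (FImp (FEx 1 (FIn 1 0))
       (FEx 1 (FAnd (FIn 1 0) (FNot (FEx 2 (FAnd (FIn 2 1) (FIn 2 0))))))))
| ax_pair : ZFCprime (FAll 0 (FAll 1 (FEx 2 (FAnd (FIn 0 2) (FIn 1 2)))))
| ax_union : ZFCprime
    (FAll 0 (FEx 1 (FAll 2 (FAll 3 (FImp (FAnd (FIn 3 2) (FIn 2 0)) (FIn 3 1))))))
| ax_inf : ZFCprime (FEx 0 (f_inductive 0 1 2 3 4))
| ax_sep : forall (phi : form) (a b x : nat),
    a <> b -> a <> x -> b <> x -> ~ free_in b phi ->
    ZFCprime (FAll a (FEx b (FAll x (FIff (FIn x b) (FAnd (FIn x a) phi)))))
| ax_repl : forall (phi : form) (a b x y y2 : nat),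
    NoDup [a; b; x; y; y2] -> ~ free_in b phi -> ~ free_in y2 phi ->
    ZFCprime
      (FAll a (FImp
         (FAnd (FAll x (FImp (FIn x a) (FEx y phi)))
               (FAll x (FImp (FIn x a) (FAll y (FAll y2
                  (FImp phi (FImp (FEx y (FAnd (FEq y y2) phi)) (FEq y y2))))))))
         (FEx b (FAll x (FImp (FIn x a) (FEx y (FAnd (FIn y b) phi)))))))
| ax_choice : ZFCprime (FAll 0 (FEx 1 f_wellorders))
| ax_pomega : ZFCprime
    (FEx 0 (FAnd f_is_omega
       (FEx 7 (FAll 8 (FIff (FIn 8 7) (FAll 9 (FImp (FIn 9 8) (FIn 9 0)))))))).

(* A countable {∈}-structure bs
   isomorphic (Mostowski collapse) to a countable transitive set with the
   true membership relation iff it is well-founded and extensional. *)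
Definition ctm_ZFCprime (M : structure) : Prop :=
  inhabited (carrier M) /\
  (forall p, ZFCprime p -> forall e, sat M e p) /\
  well_founded (elem M) /\
  (forall a b, (forall x, elem M x a <-> elem M x b) -> a = b) /\
  (exists g : nat -> carrier M, forall a, exists n, g n = a).

Fixpoint codes_nat (M : structure) (a : carrier M) (n : nat) : Prop :=
  match n with
  | 0 => forall x, ~ elem M x a
  | S n' => exists a', codes_nat M a' n' /\ forall x, elem M x a <-> (elem M x a' \/ x = a')
  end.

Definition codes_pair (M : structure) {X Y : Type}
  (c1 : carrier M -> X -> Prop) (c2 : carrier M -> Y -> Prop)
  (a : carrier M) (xy : X * Y) : Prop :=
  exists u v x' y', c1 x' (fst xy) /\ c2 y' (snd xy) /\
    (forall t, elem M t a <-> t = u \/ t = v) /\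
    (forall t, elem M t u <-> t = x') /\
    (forall t, elem M t v <-> t = x' \/ t = y').

Definition codes_set (M : structure) {X : Type} (c : carrier M -> X -> Prop)
  (a : carrier M) (S : X -> Prop) : Prop :=
  (forall x, elem M x a -> exists s, S s /\ c x s) /\
  (forall s, S s -> exists x, elem M x a /\ c x s).

Definition in_model (M : structure) {X : Type} (c : carrier M -> X -> Prop) (x : X) : Prop :=
  exists a, c a x.

Definition string := list bool.
Definition real := nat -> bool.
Definition tree := string -> Prop.

Definition bit (b : bool) : nat := if b then 1 else 0.

(* a finite binary string s is the function |s| -> 2, a set of pairs *)
Definition string_graph (s : string) (kv : nat * nat) : Prop :=
  exists b, nth_error s (fst kv) = Some b /\ snd kv = bit b.

Definition codes_string (M : structure) (a : carrier M) (s : string) : Prop :=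
  codes_set M (codes_pair M (codes_nat M) (codes_nat M)) a (string_graph s).
Definition codes_strset (M : structure) (a : carrier M) (T : tree) : Prop :=
  codes_set M (codes_string M) a T.
Definition codes_treeset (M : structure) (a : carrier M) (P : tree -> Prop) : Prop :=
  codes_set M (codes_strset M) a P.

(* code <K_{k,i}> as the function on omega x 2 : (k,i) |-> K_{k,i} *)
Definition code_graph (K : nat -> bool -> tree) (z : (nat * nat) * tree) : Prop :=
  exists b, snd (fst z) = bit b /\ forall t, snd z t <-> K (fst (fst z)) b t.
Definition codes_fcode (M : structure) (a : carrier M) (K : nat -> bool -> tree) : Prop :=
  codes_set M (codes_pair M (codes_pair M (codes_nat M) (codes_nat M)) (codes_strset M))
    a (code_graph K).

Definition prefix (s t : string) : Prop := exists r, t = s ++ r.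
Definition restr (x : real) (n : nat) : string := map x (seq 0 n).
Definition extends (x : real) (s : string) : Prop := restr x (length s) = s.

Fixpoint build_from (u : nat -> string) (k : nat) (bs : list bool) : string :=
  match bs with
  | [] => []
  | i :: bs' => u k ++ i :: build_from u (S k) bs'
  end.
Definition silver_build (u : nat -> string) (bs : list bool) : string := build_from u 0 bs.

Definition is_silver (T : tree) : Prop :=
  exists u : nat -> string, forall t,
    T t <-> exists bs, bs <> [] /\ prefix t (silver_build u bs).

Definition body (T : tree) (x : real) : Prop := forall n, T (restr x n).

Definition tree_restrict (T : tree) (u : string) : tree :=
  fun t => T t /\ (prefix u t \/ prefix t u).

Fixpoint act_string (sigma t : string) : string :=
  match sigma, t with
  | a :: sigma', b :: t' => xorb b a :: act_string sigma' t'
  | _, _ => t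
  end.
Definition act_real (sigma : string) (x : real) : real :=
  fun k => match nth_error sigma k with Some a => xorb (x k) a | None => x k end.
Definition act_tree (sigma : string) (T : tree) : tree :=
  fun t' => exists t, T t /\ t' = act_string sigma t.

Definition subtree (T U : tree) : Prop := forall t, T t -> U t.

Definition silver_forcing (P : tree -> Prop) : Prop :=
  (forall T, P T -> is_silver T) /\
  (forall T u, P T -> T u -> P (tree_restrict T u)) /\
  (forall T sigma, P T -> P (act_tree sigma T)).

Definition countable_trees (Q : tree -> Prop) : Prop :=
  exists e : nat -> tree, forall T, Q T -> exists n, e n = T.

Definition continuous (f : real -> real) : Prop :=
  forall x k, exists n, forall y, restr y n = restr x n -> f y k = f x k.

Definition fcode (f : real -> real) (k : nat) (i : bool) (s : string) : Prop :=
  (forall x, extends x s -> f x k = i) /\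
  (forall s', prefix s' s -> s' <> s -> ~ (forall x, extends x s' -> f x k = i)).

Definition predense (P D : tree -> Prop) : Prop :=
  forall T, P T -> exists T', D T' /\ exists R, P R /\ subtree R T /\ subtree R T'.

Definition regular (P : tree -> Prop) (T0 : tree) (f : real -> real) : Prop :=
  ~ exists T' sigma, P T' /\ subtree T' T0 /\
      forall x, body T' x -> forall k, f x k = act_real sigma x k.

Definition sqsubset (M : structure) (P Q : tree -> Prop) : Prop :=
  (* (A) *)
  (forall T, Q T \/ P T -> exists U, Q U /\ subtree U T) /\
  (* (B) *)
  (forall D : tree -> Prop, in_model M (codes_treeset M) D ->
     (forall T, D T -> P T) -> predense P D ->
     forall U, Q U -> exists D' : list tree,
       (forall T, In T D' -> D T) /\ (forall t, U t -> exists T, In T D' /\ T t)) /\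
  (* (C) *)
  (forall (T0 : tree) (f : real -> real), P T0 -> continuous f ->
     in_model M (codes_fcode M) (fcode f) -> regular P T0 f ->
     forall U V, Q U -> Q V -> subtree U T0 ->
     forall x, body U x -> ~ body V (f x)).

(* A Silver tree is the tree of a pattern: a partial map from positions to bits whose
   undefined positions (holes) are unbounded; restrictions and translates of patterns are
   patterns.  Silver trees are homogeneous: the pieces of a pattern above the nodes of a
   fixed level are translates of one another, so shrinking one piece inside P shrinks all
   of them.  M has only countably many pre-dense sets and codes of continuous functions,
   and P has countably many members T_k.  Below every T_k run a fusion sequence, whose
   level rises past a new hole at every stage; at each stage the (translated) pieces of
   one sequence are shrunk into members of a pre-dense set, and, for f regular on T_0,
   either off T_0 or so that f maps them away from every piece of another sequence
   (by continuity, and, when both sequences agree, because regularity says f is not the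
   translation relating two pieces).  Q consists of the restrictions and translates of
   the limit patterns; each of them is covered by the finitely many pieces of any stage,
   which gives (B) and (C). *)

From Stdlib Require Import List Arith Bool Lia Cantor PArith.
From Stdlib Require Import Classical ClassicalEpsilon FunctionalExtensionality PropExtensionality.
Import ListNotations.

Lemma least_witness (Q : nat -> Prop) :
  (exists n, Q n) -> exists m, Q m /\ forall j, j < m -> ~ Q j.
Proof.
  intros Hex.
  destruct (dec_inh_nat_subset_has_unique_least_element Q (fun n => classic (Q n)) Hex)
    as [m [[Hm Hmin] _]].
  exists m. split; [exact Hm|]. intros j Hj HQ. specialize (Hmin j HQ). lia.
Qed.

Lemma length_restr x n : length (restr x n) = n.
Proof. unfold restr. rewrite length_map, length_seq. reflexivity. Qed.

Lemma nth_restr x n i d : i < n -> nth i (restr x n) d = x i.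
Proof.
  intro Hi. unfold restr.
  rewrite nth_indep with (d' := x 0) by (rewrite length_map, length_seq; lia).
  rewrite map_nth, seq_nth by lia. reflexivity.
Qed.

Lemma restr_eq_iff x y n : restr x n = restr y n <-> forall i, i < n -> x i = y i.
Proof.
  split.
  - intros H i Hi. rewrite <- (nth_restr x n i false Hi), <- (nth_restr y n i false Hi), H.
    reflexivity.
  - intros H. apply nth_ext with (d := false) (d' := false); rewrite !length_restr; [easy|].
    intros i Hi. rewrite !nth_restr by lia. auto.
Qed.

Lemma restr_prefix x m s : prefix s (restr x m) -> s = restr x (length s).
Proof.
  intros [r Hr].
  assert (Hl : length s <= m) by (rewrite <- (length_restr x m), Hr, length_app; lia).
  apply nth_ext with (d := false) (d' := false); rewrite ?length_restr; [easy|].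
  intros i Hi. rewrite nth_restr, <- (nth_restr x m i false), Hr, app_nth1 by lia. reflexivity.
Qed.

Lemma comparable_iff w t :
  (prefix w t \/ prefix t w) <->
  (forall i, i < length w -> i < length t -> nth i w false = nth i t false).
Proof.
  revert t; induction w as [|a w IH]; intros [|b t]; simpl.
  - split; [intros; lia | intros; left; exists []; reflexivity].
  - split; [intros; lia | intros; left; exists (b :: t); reflexivity].
  - split; [intros; lia | intros; right; exists (a :: w); reflexivity].
  - split.
    + intros [[r Hr]|[r Hr]] [|i] H1 H2; injection Hr as <- ->; auto;
        rewrite app_nth1 by lia; reflexivity.
    + intros H. assert (a = b) as <- by (apply (H 0); lia).
      destruct (proj2 (IH t)) as [[r ->]|[r ->]].
      * intros i H1 H2. apply (H (S i)); lia.
      * left. exists r. reflexivity.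
      * right. exists r. reflexivity.
Qed.

(** * Patterns *)

Definition pat := nat -> option bool.
Definition sbit (s : string) (i : nat) : bool := nth i s false.

Definition compat (p : pat) (t : string) : Prop :=
  forall i b, i < length t -> p i = Some b -> nth i t false = b.
Definition pat_tree (p : pat) : tree := compat p.
Definition matches (p : pat) (x : real) : Prop := forall i b, p i = Some b -> x i = b.
Definition silver_pat (p : pat) : Prop := forall n, exists i, n <= i /\ p i = None.
Definition pat_le (r q : pat) : Prop := forall i b, q i = Some b -> r i = Some b.
Definition pat_act (s : string) (p : pat) : pat :=
  fun i => option_map (fun b => xorb b (sbit s i)) (p i).
Definition pat_restrict (p : pat) (w : string) : pat :=
  fun i => if i <? length w then Some (sbit w i) else p i.
Definition shift (p : pat) (m : nat) : pat := fun i => p (m + i).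

Lemma pat_le_refl p : pat_le p p.
Proof. intros i b H. exact H. Qed.

Lemma pat_le_trans a b c : pat_le a b -> pat_le b c -> pat_le a c.
Proof. intros H1 H2 i x H. apply H1, H2, H. Qed.

Lemma matches_le r q x : pat_le r q -> matches r x -> matches q x.
Proof. intros H1 H2 i b Hq. apply H2, H1, Hq. Qed.

Lemma matches_compat p x n : matches p x -> compat p (restr x n).
Proof.
  intros H i b Hi Hp. rewrite length_restr in Hi. rewrite nth_restr by lia. auto.
Qed.

Lemma compat_prefix p s t : compat p t -> prefix s t -> compat p s.
Proof.
  intros H [r ->] i b Hi Hp. rewrite <- (app_nth1 s r false Hi).
  apply H; [rewrite length_app; lia | exact Hp].
Qed.

Lemma compat_app p s t : compat p (s ++ t) <-> compat p s /\ compat (shift p (length s)) t.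
Proof.
  unfold compat, shift. split.
  - intros H. split.
    + intros i b Hi Hp. rewrite <- (app_nth1 s t false Hi). apply H; auto.
      rewrite length_app. lia.
    + intros i b Hi Hp. rewrite <- (H (length s + i) b); [|rewrite length_app; lia|exact Hp].
      rewrite app_nth2_plus. reflexivity.
  - intros [H1 H2] i b Hi Hp. rewrite length_app in Hi.
    destruct (Nat.lt_ge_cases i (length s)).
    + rewrite app_nth1 by auto. auto.
    + rewrite app_nth2 by auto. apply H2; [lia|]. replace (length s + (i - length s)) with i by lia.
      exact Hp.
Qed.

Definition fill (t : string) (p : pat) : real :=
  fun i => if i <? length t then nth i t false else match p i with Some b => b | None => false end.

Lemma pat_tree_iff p t : pat_tree p t <-> exists x, matches p x /\ restr x (length t) = t.
Proof.
  split.
  - intros H. exists (fill t p). split.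
    + intros i b Hp. unfold fill. destruct (Nat.ltb_spec i (length t)); [auto|now rewrite Hp].
    + apply nth_ext with (d := false) (d' := false); rewrite length_restr; [easy|].
      intros i Hi. rewrite nth_restr by auto. unfold fill.
      destruct (Nat.ltb_spec i (length t)); [reflexivity|lia].
  - intros [x [Hx <-]]. apply matches_compat, Hx.
Qed.

Lemma matches_exists p : exists x, matches p x.
Proof.
  destruct (proj1 (pat_tree_iff p [])) as [x [Hx _]]; [intros i b Hi; simpl in Hi; lia|].
  exists x. exact Hx.
Qed.

Lemma body_pat_tree p x : body (pat_tree p) x <-> matches p x.
Proof.
  split.
  - intros H i b Hp. specialize (H (S i) i b).
    rewrite length_restr, nth_restr in H by lia. auto.
  - intros H n. apply matches_compat, H.
Qed.

Lemma subtree_pat_tree_body p T : (forall x, matches p x -> body T x) -> subtree (pat_tree p) T.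
Proof. intros H t Ht. apply pat_tree_iff in Ht as [x [Hx <-]]. apply H, Hx. Qed.

Lemma subtree_pat_tree r q : subtree (pat_tree r) (pat_tree q) <-> pat_le r q.
Proof.
  split.
  - intros H i b Hq.
    set (x := fun n => match r n with Some c => c | None => if n =? i then negb b else false end).
    assert (Hx : matches r x) by (intros n c Hr; unfold x; rewrite Hr; reflexivity).
    specialize (H _ (matches_compat r x (S i) Hx) i b).
    rewrite length_restr, nth_restr in H by lia. specialize (H (Nat.lt_succ_diag_r i) Hq).
    unfold x in H. destruct (r i); [congruence|]. rewrite Nat.eqb_refl in H. now destruct b.
  - intros H t Ht i b Hi Hq. apply Ht; auto.
Qed.

Lemma pat_tree_inj p q : pat_tree p = pat_tree q -> p = q.
Proof.
  intros E.
  assert (H1 : pat_le p q) by (apply subtree_pat_tree; rewrite E; intros t Ht; exact Ht).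
  assert (H2 : pat_le q p) by (apply subtree_pat_tree; rewrite E; intros t Ht; exact Ht).
  apply functional_extensionality. intro i.
  destruct (q i) as [b|] eqn:Eq; [apply H1, Eq|].
  destruct (p i) as [b|] eqn:Ep; [rewrite (H2 i b Ep) in Eq; discriminate|reflexivity].
Qed.

Lemma sbit_over s i : length s <= i -> sbit s i = false.
Proof. intro H. apply nth_overflow, H. Qed.

Fixpoint sxor (a b : string) : string :=
  match a, b with
  | x :: a', y :: b' => xorb x y :: sxor a' b'
  | [], _ => b
  | _, [] => a
  end.

Lemma sbit_sxor a b i : sbit (sxor a b) i = xorb (sbit a i) (sbit b i).
Proof.
  unfold sbit. revert b i; induction a as [|x a IH]; intros [|y b] [|i]; simpl; auto.
  - now destruct x.
  - now rewrite xorb_false_r.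
Qed.

Lemma act_string_length s t : length (act_string s t) = length t.
Proof. revert t; induction s as [|a s IH]; intros [|b t]; simpl; auto. Qed.

Lemma act_string_nth s t i :
  i < length t -> nth i (act_string s t) false = xorb (nth i t false) (sbit s i).
Proof.
  unfold sbit. revert t i; induction s as [|a s IH]; intros [|b t] i Hi; simpl in *; try lia.
  - destruct i; [destruct b | destruct (nth i t false)]; reflexivity.
  - destruct i; simpl; auto. apply IH. lia.
Qed.

Lemma act_string_invol s t : act_string s (act_string s t) = t.
Proof.
  revert t; induction s as [|a s IH]; intros [|b t]; simpl; auto.
  rewrite IH. now destruct a, b.
Qed.

Lemma act_real_eq s x i : act_real s x i = xorb (x i) (sbit s i).
Proof.
  unfold act_real, sbit. destruct (nth_error s i) eqn:E.
  - rewrite (nth_error_nth s i false E). reflexivity.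
  - apply nth_error_None in E. rewrite nth_overflow, xorb_false_r by auto. reflexivity.
Qed.

Lemma matches_act s p x : matches (pat_act s p) x <-> matches p (act_real s x).
Proof.
  unfold matches, pat_act. split.
  - intros H i b Hp. specialize (H i (xorb b (sbit s i))). rewrite Hp in H.
    rewrite act_real_eq, H by reflexivity. now destruct b, (sbit s i).
  - intros H i c Hp. destruct (p i) as [b|] eqn:E; [|discriminate]. injection Hp as <-.
    specialize (H i b E). rewrite act_real_eq in H. rewrite <- H. now destruct (x i), (sbit s i).
Qed.

Lemma pat_act_act a b p : pat_act a (pat_act b p) = pat_act (sxor a b) p.
Proof.
  apply functional_extensionality; intro i. unfold pat_act. rewrite sbit_sxor.
  destruct (p i) as [c|]; simpl; auto. now destruct c, (sbit a i), (sbit b i).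
Qed.

Lemma pat_act_invol s p : pat_act s (pat_act s p) = p.
Proof.
  apply functional_extensionality; intro i. unfold pat_act.
  destruct (p i) as [b|]; simpl; auto. now destruct b, (sbit s i).
Qed.

Lemma pat_act_nil p : pat_act [] p = p.
Proof.
  apply functional_extensionality; intro i. unfold pat_act. rewrite sbit_over by (simpl; lia).
  destruct (p i); simpl; auto. now rewrite xorb_false_r.
Qed.

Lemma pat_le_act s r q : pat_le r q -> pat_le (pat_act s r) (pat_act s q).
Proof.
  intros H i b Hq. unfold pat_act in *. destruct (q i) eqn:E; [|discriminate].
  rewrite (H _ _ E). exact Hq.
Qed.

Lemma compat_act s p t : compat (pat_act s p) t <-> compat p (act_string s t).
Proof.
  unfold compat, pat_act. rewrite act_string_length. split.
  - intros H i b Hi Hp. rewrite act_string_nth by auto.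
    specialize (H i (xorb b (sbit s i)) Hi). rewrite Hp in H.
    rewrite H by reflexivity. now destruct b, (sbit s i).
  - intros H i c Hi Hp. destruct (p i) as [b|] eqn:E; [|discriminate]. injection Hp as <-.
    specialize (H i b Hi E). rewrite act_string_nth in H by auto. rewrite <- H.
    now destruct (nth i t false), (sbit s i).
Qed.

Lemma pat_tree_act s p : pat_tree (pat_act s p) = act_tree s (pat_tree p).
Proof.
  apply functional_extensionality; intro t. apply propositional_extensionality.
  unfold act_tree, pat_tree. rewrite compat_act. split.
  - intros H. exists (act_string s t). rewrite act_string_invol. auto.
  - intros [t' [Ht ->]]. rewrite act_string_invol. exact Ht.
Qed.

Lemma pat_restrict_nil p : pat_restrict p [] = p.
Proof. reflexivity. Qed.

Lemma pat_restrict_le p w : compat p w -> pat_le (pat_restrict p w) p.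
Proof.
  intros Hw i b Hp. unfold pat_restrict. destruct (Nat.ltb_spec i (length w)); auto.
  f_equal. apply Hw; auto.
Qed.

Lemma pat_le_restrict p q w : pat_le p q -> pat_le (pat_restrict p w) (pat_restrict q w).
Proof. intros H i b Hq. unfold pat_restrict in *. destruct (i <? length w); auto. Qed.

Lemma matches_restrict p w x :
  compat p w -> matches (pat_restrict p w) x <-> matches p x /\ restr x (length w) = w.
Proof.
  intro Hw. split.
  - intros H. assert (Hpre : forall i, i < length w -> x i = sbit w i).
    { intros i Hi. apply H. unfold pat_restrict. apply Nat.ltb_lt in Hi. now rewrite Hi. }
    split; [apply (matches_le _ _ x (pat_restrict_le p w Hw) H)|].
    apply nth_ext with (d := false) (d' := false); rewrite length_restr; [easy|].
    intros i Hi. rewrite nth_restr by auto. auto.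
  - intros [H1 H2] i b Hp. unfold pat_restrict in Hp. destruct (Nat.ltb_spec i (length w)).
    + injection Hp as <-. unfold sbit. rewrite <- H2, nth_restr by auto. reflexivity.
    + auto.
Qed.

Lemma pat_tree_restrict p w :
  compat p w -> pat_tree (pat_restrict p w) = tree_restrict (pat_tree p) w.
Proof.
  intros Hw. apply functional_extensionality; intro t. apply propositional_extensionality.
  unfold tree_restrict, pat_tree, pat_restrict, compat, sbit. rewrite comparable_iff. split.
  - intros H. split.
    + intros i b Hi Hp. destruct (Nat.ltb_spec i (length w)) as [Hw'|].
      * rewrite (H i (nth i w false) Hi) by (apply Nat.ltb_lt in Hw'; now rewrite Hw').
        apply Hw; auto.
      * apply H; auto. destruct (Nat.ltb_spec i (length w)); [lia|auto].
    + intros i H1 H2. symmetry. apply H; auto. destruct (Nat.ltb_spec i (length w)); [easy|lia].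
  - intros [H Hc] i b Hi Hp. destruct (Nat.ltb_spec i (length w)).
    + injection Hp as <-. symmetry; auto.
    + auto.
Qed.

Lemma pat_restrict_act s p u :
  pat_restrict (pat_act s p) u = pat_act s (pat_restrict p (act_string s u)).
Proof.
  apply functional_extensionality; intro i. unfold pat_restrict, pat_act.
  rewrite act_string_length. destruct (Nat.ltb_spec i (length u)); [|reflexivity].
  simpl. unfold sbit at 2. rewrite act_string_nth by auto.
  unfold sbit. now destruct (nth i u false), (nth i s false).
Qed.

Lemma pat_restrict_restrict p w u :
  compat p w -> compat (pat_restrict p w) u ->
  exists w', compat p w' /\ pat_restrict (pat_restrict p w) u = pat_restrict p w'.
Proof.
  intros Hw Hu.
  assert (Hagree : forall i, i < length u -> i < length w -> sbit u i = sbit w i).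
  { intros i H1 H2. apply Hu; auto. unfold pat_restrict. apply Nat.ltb_lt in H2. now rewrite H2. }
  destruct (Nat.le_gt_cases (length u) (length w)).
  - exists w. split; [exact Hw|]. apply functional_extensionality; intro i. unfold pat_restrict.
    destruct (Nat.ltb_spec i (length u)); auto. destruct (Nat.ltb_spec i (length w)); [|lia].
    rewrite Hagree; auto.
  - exists u. split.
    + intros i b Hi Hp. destruct (Nat.ltb_spec i (length w)).
      * fold (sbit u i). rewrite Hagree; auto. apply Hw; auto.
      * apply Hu; auto. unfold pat_restrict. destruct (Nat.ltb_spec i (length w)); [lia|auto].
    + apply functional_extensionality; intro i. unfold pat_restrict.
      destruct (Nat.ltb_spec i (length u)); auto. destruct (Nat.ltb_spec i (length w)); [lia|auto].
Qed.

Lemma silver_pat_act s p : silver_pat p -> silver_pat (pat_act s p).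
Proof. intros H n. destruct (H n) as [i [Hi Hp]]. exists i. unfold pat_act. now rewrite Hp. Qed.

Lemma silver_pat_restrict p w : silver_pat p -> silver_pat (pat_restrict p w).
Proof.
  intros H n. destruct (H (n + length w)) as [i [Hi Hp]]. exists i. split; [lia|].
  unfold pat_restrict. destruct (Nat.ltb_spec i (length w)); [lia|auto].
Qed.

(** * Silver trees as patterns *)

Fixpoint blocks_pat_fuel (fuel : nat) (u : nat -> string) (k n : nat) : option bool :=
  match fuel with
  | 0 => None
  | S f => if n <? length (u k) then Some (sbit (u k) n)
           else if n =? length (u k) then None
           else blocks_pat_fuel f u (S k) (n - length (u k) - 1)
  end.

(* The pattern of the Silver tree [u k ^ i_k ^ u (k+1) ^ i_(k+1) ^ ...]; the position
   decreases at each recursive call, so fuel [S n] suffices. *)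
Definition blocks_pat (u : nat -> string) (k : nat) : pat := fun n => blocks_pat_fuel (S n) u k n.

Lemma blocks_pat_unfold u k n :
  blocks_pat u k n =
  if n <? length (u k) then Some (sbit (u k) n)
  else if n =? length (u k) then None else blocks_pat u (S k) (n - length (u k) - 1).
Proof.
  assert (Hfuel : forall f f' k n, n < f -> n < f' ->
            blocks_pat_fuel f u k n = blocks_pat_fuel f' u k n).
  { induction f as [|f IH]; intros [|f'] k' n' H1 H2; try lia. simpl.
    destruct (Nat.ltb_spec n' (length (u k'))); auto.
    destruct (Nat.eqb_spec n' (length (u k'))); auto. apply IH; lia. }
  unfold blocks_pat at 1. simpl. destruct (Nat.ltb_spec n (length (u k))); auto.
  destruct (Nat.eqb_spec n (length (u k))); auto. apply Hfuel; lia.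
Qed.

Lemma shift_blocks_pat u k : shift (blocks_pat u k) (S (length (u k))) = blocks_pat u (S k).
Proof.
  apply functional_extensionality; intro n. unfold shift. rewrite blocks_pat_unfold.
  destruct (Nat.ltb_spec (S (length (u k)) + n) (length (u k))); [lia|].
  destruct (Nat.eqb_spec (S (length (u k)) + n) (length (u k))); [lia|].
  f_equal. lia.
Qed.

Lemma compat_blocks_head u k c : compat (blocks_pat u k) (u k ++ [c]).
Proof.
  intros i b Hi Hp. rewrite blocks_pat_unfold in Hp.
  destruct (Nat.ltb_spec i (length (u k))).
  - injection Hp as <-. rewrite app_nth1 by auto. reflexivity.
  - rewrite length_app in Hi; simpl in Hi.
    destruct (Nat.eqb_spec i (length (u k))); [discriminate|lia].
Qed.

Lemma compat_blocks_cons u k c t :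
  compat (blocks_pat u k) (u k ++ c :: t) <-> compat (blocks_pat u (S k)) t.
Proof.
  replace (u k ++ c :: t) with ((u k ++ [c]) ++ t) by (rewrite <- app_assoc; reflexivity).
  rewrite compat_app, length_app, Nat.add_1_r, shift_blocks_pat.
  split; [tauto|]. split; [apply compat_blocks_head|assumption].
Qed.

Lemma compat_build_from u bs k : compat (blocks_pat u k) (build_from u k bs).
Proof.
  revert k. induction bs as [|c bs IH]; intros k.
  - intros i b Hi. simpl in Hi. lia.
  - simpl. apply compat_blocks_cons, IH.
Qed.

Lemma compat_blocks_build_from u n : forall t k, length t <= n -> compat (blocks_pat u k) t ->
  exists bs, bs <> [] /\ prefix t (build_from u k bs).
Proof.
  induction n as [|n IH]; intros t k Hn Hc.
  - destruct t; [|simpl in Hn; lia]. exists [false]. split; [discriminate|].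
    eexists. reflexivity.
  - assert (Hcmp : prefix (u k) t \/ prefix t (u k)).
    { apply comparable_iff. intros i H1 H2. symmetry. apply Hc; auto.
      rewrite blocks_pat_unfold. apply Nat.ltb_lt in H1. now rewrite H1. }
    destruct (Nat.le_gt_cases (length t) (length (u k))) as [Hle|Hgt].
    + exists [false]. split; [discriminate|]. simpl.
      assert (Hpre : prefix t (u k)).
      { destruct Hcmp as [[r Hr]|]; auto. rewrite Hr, length_app in Hle.
        destruct r; [|simpl in Hle; lia]. rewrite app_nil_r in Hr. subst.
        exists []. symmetry. apply app_nil_r. }
      destruct Hpre as [r ->]. exists (r ++ [false]). now rewrite <- app_assoc.
    + destruct Hcmp as [[r Hr]|[r Hr]];
        [|rewrite Hr, length_app in Hgt; lia].
      destruct r as [|c t']; [rewrite app_nil_r in Hr; subst; lia|]. subst t.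
      apply compat_blocks_cons in Hc.
      destruct (IH t' (S k)) as [bs [_ [r Hr]]]; auto.
      { rewrite length_app in Hn. simpl in Hn. lia. }
      exists (c :: bs). split; [discriminate|]. simpl. rewrite Hr. exists r.
      now rewrite <- app_assoc.
Qed.

Lemma blocks_pat_tree u t :
  pat_tree (blocks_pat u 0) t <-> exists bs, bs <> [] /\ prefix t (silver_build u bs).
Proof.
  split.
  - intros H. apply (compat_blocks_build_from u (length t)); auto.
  - intros [bs [_ Hp]]. exact (compat_prefix _ _ _ (compat_build_from u bs 0) Hp).
Qed.

Lemma silver_blocks_pat u : silver_pat (blocks_pat u 0).
Proof.
  enough (H : forall m k, exists i, m <= i /\ blocks_pat u k i = None) by (intro n; apply H).
  induction m as [|m IH]; intros k.
  - exists (length (u k)). split; [lia|].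
    rewrite blocks_pat_unfold, Nat.ltb_irrefl, Nat.eqb_refl. reflexivity.
  - destruct (IH (S k)) as [i [Hi Hp]]. exists (S (length (u k)) + i). split; [lia|].
    rewrite <- shift_blocks_pat in Hp. exact Hp.
Qed.

Lemma is_silver_pat T : is_silver T -> exists p, silver_pat p /\ T = pat_tree p.
Proof.
  intros [u Hu]. exists (blocks_pat u 0). split; [apply silver_blocks_pat|].
  apply functional_extensionality; intro t. apply propositional_extensionality.
  rewrite Hu, blocks_pat_tree. reflexivity.
Qed.

(* The blocks of [p] are the maximal hole-free segments, delimited by the least holes. *)
Lemma pat_is_silver p : silver_pat p -> is_silver (pat_tree p).
Proof.
  intros Hs.
  assert (Hnh : forall n, exists h,
            (n <= h /\ p h = None) /\ forall j, j < h -> ~ (n <= j /\ p j = None))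
    by (intro n; apply least_witness, Hs).
  destruct (choice _ Hnh) as [nh Hnh'].
  set (start := fix start k := match k with 0 => 0 | S k => S (nh (start k)) end).
  set (val := fun i => match p i with Some b => b | None => false end).
  set (u := fun k => map val (seq (start k) (nh (start k) - start k))).
  assert (Hlen : forall k, length (u k) = nh (start k) - start k)
    by (intro k; unfold u; rewrite length_map, length_seq; reflexivity).
  assert (Hblocks : forall n k, blocks_pat u k n = p (start k + n)).
  { induction n as [n IH] using (well_founded_induction lt_wf). intro k.
    destruct (Hnh' (start k)) as [[Hge Hhole] Hleast].
    rewrite blocks_pat_unfold, Hlen.
    destruct (Nat.ltb_spec n (nh (start k) - start k)).
    - unfold sbit, u. rewrite nth_indep with (d' := val 0) by (rewrite length_map, length_seq; lia).
      rewrite map_nth, seq_nth by lia. unfold val.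
      destruct (p (start k + n)) eqn:E; auto.
      exfalso. apply (Hleast (start k + n)); [lia|split; [lia|exact E]].
    - destruct (Nat.eqb_spec n (nh (start k) - start k)).
      + replace (start k + n) with (nh (start k)) by lia. symmetry. exact Hhole.
      + rewrite IH by lia. f_equal. simpl. lia. }
  exists u. intro t. rewrite <- blocks_pat_tree.
  replace (blocks_pat u 0) with p; [reflexivity|].
  apply functional_extensionality. intro n. now rewrite Hblocks.
Qed.

Section SilverForcing.

Variable P : tree -> Prop.
Hypothesis HP : silver_forcing P.

Lemma forcing_pat T : P T -> exists p, T = pat_tree p.
Proof. intro H. destruct (is_silver_pat T (proj1 HP T H)) as [p [_ E]]. eauto. Qed.

Lemma forcing_silver_pat p : P (pat_tree p) -> silver_pat p.
Proof.
  intro H. destruct (is_silver_pat _ (proj1 HP _ H)) as [q [Hq E]].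
  apply pat_tree_inj in E. now subst.
Qed.

Lemma forcing_act s p : P (pat_tree p) -> P (pat_tree (pat_act s p)).
Proof. intro H. rewrite pat_tree_act. apply (proj2 (proj2 HP)), H. Qed.

Lemma forcing_restrict p w : compat p w -> P (pat_tree p) -> P (pat_tree (pat_restrict p w)).
Proof. intros Hw H. rewrite pat_tree_restrict by exact Hw. apply (proj1 (proj2 HP)); auto. Qed.

End SilverForcing.

(** * Objects coded in a well-founded model *)

Lemma wf_no_2cycle {A : Type} (R : A -> A -> Prop) :
  well_founded R -> forall x y, R x y -> R y x -> False.
Proof.
  intros Hwf x. induction (Hwf x) as [x _ IH]. intros y H1 H2. exact (IH y H2 x H2 H1).
Qed.

Section Codes.

Variable M : structure.

Definition code_unique {X : Type} (c : carrier M -> X -> Prop) : Prop :=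
  forall a x y, c a x -> c a y -> x = y.

Lemma codes_pair_unique {X Y : Type} (c1 : carrier M -> X -> Prop) (c2 : carrier M -> Y -> Prop) :
  code_unique c1 -> code_unique c2 -> code_unique (codes_pair M c1 c2).
Proof.
  intros F1 F2 a [p1 p2] [q1 q2] [u [v [x [y [Hx [Hy [Ha [Hu Hv]]]]]]]]
    [u' [v' [x' [y' [Hx' [Hy' [Ha' [Hu' Hv']]]]]]]]; simpl in *.
  assert (x' = x) as ->.
  { destruct (proj1 (Ha' u) (proj2 (Ha u) (or_introl eq_refl))) as [->| ->].
    - apply Hu, Hu'. reflexivity.
    - apply Hu, Hv'. now left. }
  assert (y' = y) as ->.
  { destruct (proj1 (Ha v') (proj2 (Ha' v') (or_intror eq_refl))) as [->| ->].
    - assert (y' = x) as -> by (apply Hu, Hv'; now right).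
      destruct (proj1 (Ha' v) (proj2 (Ha v) (or_intror eq_refl))) as [->| ->].
      + symmetry. apply Hu', Hv. now right.
      + destruct (proj1 (Hv' y) (proj2 (Hv y) (or_intror eq_refl))); auto.
    - destruct (proj1 (Hv y') (proj2 (Hv' y') (or_intror eq_refl))) as [->|]; auto.
      destruct (proj1 (Hv' y) (proj2 (Hv y) (or_intror eq_refl))); auto. }
  f_equal; eauto.
Qed.

Lemma codes_set_unique {X : Type} (c : carrier M -> X -> Prop) :
  code_unique c -> code_unique (codes_set M c).
Proof.
  intros F a S S' [H1 H2] [H1' H2']. apply functional_extensionality; intro s.
  apply propositional_extensionality. split.
  - intro Hs. destruct (H2 s Hs) as [x [Hx Hc]]. destruct (H1' x Hx) as [s' [Hs' Hc']].
    now rewrite (F _ _ _ Hc Hc').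
  - intro Hs. destruct (H2' s Hs) as [x [Hx Hc]]. destruct (H1 x Hx) as [s' [Hs' Hc']].
    now rewrite (F _ _ _ Hc Hc').
Qed.

Hypothesis Hwf : well_founded (elem M).

Lemma codes_nat_unique : code_unique (codes_nat M).
Proof.
  intros a n m. revert a m. induction n as [|n IH]; intros a [|m] H1 H2; simpl in *; auto.
  - destruct H2 as [a' [_ H]]. exfalso. apply (H1 a'), H. now right.
  - destruct H1 as [a' [_ H]]. exfalso. apply (H2 a'), H. now right.
  - destruct H1 as [a1 [Hc1 E1]], H2 as [a2 [Hc2 E2]].
    assert (a1 = a2) as <-.
    { destruct (proj1 (E2 a1) (proj2 (E1 a1) (or_intror eq_refl))) as [H12|]; auto.
      destruct (proj1 (E1 a2) (proj2 (E2 a2) (or_intror eq_refl))) as [H21|]; auto.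
      exfalso. exact (wf_no_2cycle _ Hwf a1 a2 H12 H21). }
    f_equal. eauto.
Qed.

Lemma codes_string_unique : code_unique (codes_string M).
Proof.
  intros a s s' H1 H2.
  assert (E : string_graph s = string_graph s')
    by exact (codes_set_unique _ (codes_pair_unique _ _ codes_nat_unique codes_nat_unique)
                a _ _ H1 H2).
  assert (Hbit : forall b b', bit b = bit b' -> b = b') by (intros [] []; simpl; congruence).
  apply nth_error_ext. intro k.
  destruct (nth_error s k) as [b|] eqn:Hs.
  - assert (G : string_graph s (k, bit b)) by (exists b; auto).
    rewrite E in G. destruct G as [b' [G1 G2]]. simpl in *. rewrite G1. f_equal. auto.
  - destruct (nth_error s' k) as [b|] eqn:Hs'; auto.
    assert (G : string_graph s' (k, bit b)) by (exists b; auto).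
    rewrite <- E in G. destruct G as [b' [G1 G2]]. simpl in *. congruence.
Qed.

Lemma codes_strset_unique : code_unique (codes_strset M).
Proof. exact (codes_set_unique _ codes_string_unique). Qed.

Lemma codes_treeset_unique : code_unique (codes_treeset M).
Proof. exact (codes_set_unique _ codes_strset_unique). Qed.

Lemma codes_fcode_unique : code_unique (codes_fcode M).
Proof.
  intros a K K' H1 H2.
  assert (E : code_graph K = code_graph K')
    by exact (codes_set_unique _ (codes_pair_unique _ _
               (codes_pair_unique _ _ codes_nat_unique codes_nat_unique) codes_strset_unique)
               a _ _ H1 H2).
  apply functional_extensionality; intro k. apply functional_extensionality; intro b.
  assert (G : code_graph K ((k, bit b), K k b)) by (exists b; simpl; split; [reflexivity|tauto]).
  rewrite E in G. destruct G as [b' [G1 G2]]. simpl in *.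
  assert (b' = b) as -> by (destruct b, b'; simpl in *; congruence).
  apply functional_extensionality; intro t. apply propositional_extensionality. apply G2.
Qed.

End Codes.

Lemma in_model_enumerable (M : structure) {X : Type} (c : carrier M -> X -> Prop) (x0 : X) :
  (exists g : nat -> carrier M, forall a, exists n, g n = a) -> code_unique M c ->
  exists e : nat -> X, forall x, in_model M c x -> exists n, e n = x.
Proof.
  intros [g Hg] Hc. exists (fun n => epsilon (inhabits x0) (c (g n))).
  intros x [a Ha]. destruct (Hg a) as [n <-]. exists n.
  apply (Hc (g n)); [apply epsilon_spec; eauto | exact Ha].
Qed.

Lemma fcode_witness f x k :
  continuous f -> exists s, fcode f k (f x k) s /\ extends x s.
Proof.
  intro Hc.
  destruct (least_witness (fun m => forall y, extends y (restr x m) -> f y k = f x k))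
    as [m [Hm Hmin]].
  { destruct (Hc x k) as [n Hn]. exists n. intros y Hy. apply Hn.
    unfold extends in Hy. now rewrite length_restr in Hy. }
  exists (restr x m). repeat split.
  - exact Hm.
  - intros s' Hp Hne Hs'. pose proof (restr_prefix _ _ _ Hp) as Es'.
    assert (length s' <= m)
      by (destruct Hp as [r Hr]; rewrite <- (length_restr x m), Hr, length_app; lia).
    assert (length s' <> m) by (intro E; apply Hne; rewrite Es', E; reflexivity).
    apply (Hmin (length s')); [lia|]. rewrite <- Es'. exact Hs'.
  - unfold extends. now rewrite length_restr.
Qed.

Lemma fcode_inj f f' : continuous f -> continuous f' -> fcode f = fcode f' -> f = f'.
Proof.
  intros Hc Hc' E.
  apply functional_extensionality; intro x. apply functional_extensionality; intro k.
  destruct (fcode_witness f x k Hc) as [s [Hs Hx]]. rewrite E in Hs. symmetry. apply Hs, Hx.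
Qed.

Section CountableModel.

Variable M : structure.
Hypothesis HM : ctm_ZFCprime M.

Lemma enumerate_coded_sets :
  exists Ds : nat -> (tree -> Prop), forall D, in_model M (codes_treeset M) D -> exists n, Ds n = D.
Proof.
  destruct HM as [_ [_ [Hwf [_ Hg]]]].
  exact (in_model_enumerable M _ (fun _ => False) Hg (codes_treeset_unique M Hwf)).
Qed.

Lemma enumerate_coded_functions :
  exists Fs : nat -> (real -> real),
    forall f, continuous f -> in_model M (codes_fcode M) (fcode f) -> exists n, Fs n = f.
Proof.
  destruct HM as [_ [_ [Hwf [_ Hg]]]].
  destruct (in_model_enumerable M _ (fun _ _ _ => False) Hg (codes_fcode_unique M Hwf)) as [Ks HKs].
  exists (fun n => epsilon (inhabits (fun x => x)) (fun f => continuous f /\ fcode f = Ks n)).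
  intros f Hc Hf. destruct (HKs _ Hf) as [n Hn]. exists n.
  destruct (epsilon_spec (inhabits (fun x : real => x)) (fun f => continuous f /\ fcode f = Ks n))
    as [Hc' E]; [eauto|].
  apply fcode_inj; auto. now rewrite E.
Qed.

Lemma enumerate_coded_forcing (P : tree -> Prop) (T0 : tree) :
  in_model M (codes_treeset M) P -> P T0 ->
  exists Xs : nat -> tree, (forall n, P (Xs n)) /\ forall T, P T -> exists n, Xs n = T.
Proof.
  intros [a [_ Ha]] HT0. destruct HM as [_ [_ [Hwf [_ Hg]]]].
  destruct (in_model_enumerable M _ T0 Hg (codes_strset_unique M Hwf)) as [Ys HYs].
  exists (fun n => if excluded_middle_informative (P (Ys n)) then Ys n else T0). split.
  - intro n. now destruct (excluded_middle_informative (P (Ys n))).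
  - intros T HT. destruct (Ha T HT) as [x [_ Hx]]. destruct (HYs T) as [n <-]; [exists x; exact Hx|].
    exists n. now destruct (excluded_middle_informative (P (Ys n))).
Qed.

End CountableModel.

(** * Separating images of continuous functions *)

Definition image_avoids (f : real -> real) (Z W : pat) : Prop :=
  forall y z, matches Z y -> matches W z -> f y <> z.

Lemma image_avoids_le f Z W Z' W' :
  pat_le Z' Z -> pat_le W' W -> image_avoids f Z W -> image_avoids f Z' W'.
Proof. intros HZ HW H y z Hy Hz. apply H; eapply matches_le; eauto. Qed.

(* Fix a hole of [W] to the opposite of the value [f] takes there near a point of [Z]. *)
Lemma separate_image_silver f Z W :
  continuous f -> silver_pat W ->
  exists s s', compat Z s /\ compat W s' /\ image_avoids f (pat_restrict Z s) (pat_restrict W s').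
Proof.
  intros Hc Hs.
  destruct (matches_exists Z) as [x Hx]. destruct (Hs 0) as [p [_ Hp]].
  set (z0 := fun i => if i =? p then negb (f x p)
                      else match W i with Some b => b | None => false end).
  assert (Hz0 : matches W z0).
  { intros i b Hw. unfold z0. destruct (Nat.eqb_spec i p); [congruence|]. now rewrite Hw. }
  destruct (Hc x p) as [n Hn].
  exists (restr x n), (restr z0 (S p)).
  split; [apply matches_compat, Hx|]. split; [apply matches_compat, Hz0|].
  intros y z Hy Hz E.
  apply matches_restrict in Hy as [_ Hy]; [|apply matches_compat, Hx].
  apply matches_restrict in Hz as [_ Hz]; [|apply matches_compat, Hz0].
  rewrite length_restr in Hy, Hz.
  assert (Ez : z p = z0 p) by (apply (proj1 (restr_eq_iff _ _ _) Hz); lia).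
  unfold z0 in Ez. rewrite Nat.eqb_refl, <- E, (Hn y Hy) in Ez. now destruct (f x p).
Qed.

Lemma separate_image_translate f Z pi :
  continuous f -> ~ (forall x, matches Z x -> forall m, f x m = act_real pi x m) ->
  exists s, compat Z s /\ image_avoids f (pat_restrict Z s) (pat_act pi (pat_restrict Z s)).
Proof.
  intros Hc Hne.
  apply not_all_ex_not in Hne as [x Hne]. apply imply_to_and in Hne as [Hx Hne].
  apply not_all_ex_not in Hne as [m Hm].
  destruct (Hc x m) as [n Hn].
  exists (restr x (n + S m)). split; [apply matches_compat, Hx|].
  intros y z Hy Hz E.
  apply matches_restrict in Hy as [_ Hy]; [|apply matches_compat, Hx].
  apply matches_act, matches_restrict in Hz as [_ Hz]; [|apply matches_compat, Hx].
  rewrite length_restr, restr_eq_iff in Hy, Hz.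
  assert (E1 : f y m = f x m) by (apply Hn, restr_eq_iff; intros i Hi; apply Hy; lia).
  assert (E2 : act_real pi z m = x m) by (apply Hz; lia).
  apply Hm. rewrite <- E1, E, !act_real_eq. rewrite act_real_eq in E2. rewrite <- E2.
  now destruct (z m), (sbit pi m).
Qed.

(** * Fusion states *)

Definition state := nat -> pat * nat.
Definition pat_of (st : state) (k : nat) : pat := fst (st k).
Definition level (st : state) (k : nat) : nat := snd (st k).

Definition node (st : state) (k : nat) (w : string) : Prop :=
  length w = level st k /\ compat (pat_of st k) w.
Definition piece (st : state) (k : nat) (sg w : string) : pat :=
  pat_act sg (pat_restrict (pat_of st k) w).

Definition fusion_le (st st' : state) : Prop := forall k,
  level st k <= level st' k /\ pat_le (pat_of st' k) (pat_of st k) /\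
  forall i, i < level st k -> pat_of st' k i = pat_of st k i.
Definition shrinks (st st' : state) : Prop :=
  fusion_le st st' /\ forall k, level st' k = level st k.

Lemma fusion_le_refl st : fusion_le st st.
Proof. intro k. split; [lia|split; [apply pat_le_refl|reflexivity]]. Qed.

Lemma fusion_le_trans a b c : fusion_le a b -> fusion_le b c -> fusion_le a c.
Proof.
  intros H1 H2 k. destruct (H1 k) as [A1 [B1 C1]], (H2 k) as [A2 [B2 C2]].
  split; [lia|]. split; [eapply pat_le_trans; eauto|].
  intros i Hi. rewrite C2 by lia. auto.
Qed.

Lemma shrinks_refl st : shrinks st st.
Proof. split; [apply fusion_le_refl|reflexivity]. Qed.

Lemma shrinks_trans a b c : shrinks a b -> shrinks b c -> shrinks a c.
Proof.
  intros [H1 E1] [H2 E2]. split; [eapply fusion_le_trans; eauto|]. intro k. congruence.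
Qed.

Lemma node_shrinks st st' k w : shrinks st st' -> node st' k w <-> node st k w.
Proof.
  intros [H E]. destruct (H k) as [_ [_ C]]. unfold node, compat. rewrite E.
  split; intros [Hl Hc]; split; auto; intros i b Hi Hp; apply Hc; auto.
  - rewrite C by lia. exact Hp.
  - rewrite <- C by lia. exact Hp.
Qed.

Lemma piece_le st st' k sg w : fusion_le st st' -> pat_le (piece st' k sg w) (piece st k sg w).
Proof. intro H. apply pat_le_act, pat_le_restrict, (H k). Qed.

Lemma matches_node st k sg x :
  matches (pat_act sg (pat_of st k)) x -> exists w, node st k w /\ matches (piece st k sg w) x.
Proof.
  intro Hx. apply matches_act in Hx.
  exists (restr (act_real sg x) (level st k)).
  assert (Hw : node st k (restr (act_real sg x) (level st k)))
    by (split; [apply length_restr | apply matches_compat, Hx]).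
  split; [exact Hw|]. apply matches_act, matches_restrict; [apply Hw|].
  split; [exact Hx|]. now rewrite length_restr.
Qed.

Fixpoint all_strings (L : nat) : list string :=
  match L with
  | 0 => [[]]
  | S L' => map (cons false) (all_strings L') ++ map (cons true) (all_strings L')
  end.

Lemma in_all_strings w : In w (all_strings (length w)).
Proof.
  induction w as [|b w IH]; simpl; auto.
  apply in_or_app. destruct b; [right|left]; apply in_map, IH.
Qed.

Lemma shrink_each_node (V : state -> Prop) (Phi : string -> state -> Prop) k st :
  (forall w s s', shrinks s s' -> Phi w s -> Phi w s') ->
  (forall w s, V s -> node s k w -> exists s', V s' /\ shrinks s s' /\ Phi w s') ->
  V st -> exists st', V st' /\ shrinks st st' /\ forall w, node st' k w -> Phi w st'.
Proof.
  intros Hmono Hstep.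
  assert (Hlist : forall ws st, V st ->
            exists st', V st' /\ shrinks st st' /\ forall w, In w ws -> node st' k w -> Phi w st').
  { induction ws as [|w ws IH]; intros s Hs.
    - exists s. split; [exact Hs|]. split; [apply shrinks_refl|]. intros w [].
    - destruct (classic (node s k w)) as [Hw|Hw].
      + destruct (Hstep w s Hs Hw) as [s1 [Hs1 [R1 P1]]].
        destruct (IH s1 Hs1) as [s2 [Hs2 [R2 P2]]].
        exists s2. split; [exact Hs2|]. split; [eapply shrinks_trans; eauto|].
        intros w' [<-|Hin] Hn; [eapply Hmono; eauto|auto].
      + destruct (IH s Hs) as [s2 [Hs2 [R2 P2]]].
        exists s2. split; [exact Hs2|]. split; [exact R2|].
        intros w' [<-|Hin] Hn; [|auto]. exfalso. apply Hw, (node_shrinks _ _ _ _ R2), Hn. }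
  intros Hst. destruct (Hlist (all_strings (level st k)) st Hst) as [st' [Hst' [R H]]].
  exists st'. split; [exact Hst'|]. split; [exact R|]. intros w Hn. apply H; [|exact Hn].
  rewrite <- (proj2 R k), <- (proj1 Hn). apply in_all_strings.
Qed.

Lemma upd_eq {A : Type} (e : nat -> A) x a : upd e x a x = a.
Proof. unfold upd. now rewrite Nat.eqb_refl. Qed.

Lemma upd_neq {A : Type} (e : nat -> A) x a y : y <> x -> upd e x a y = e y.
Proof. intro H. unfold upd. now destruct (Nat.eqb_spec y x). Qed.

Definition graft (Y : pat) (L : nat) (Z : pat) : pat := fun i => if i <? L then Y i else Z i.

Lemma graft_le Y Z w : pat_le Z (pat_restrict Y w) -> pat_le (graft Y (length w) Z) Y.
Proof.
  intros H i b Hy. unfold graft. destruct (Nat.ltb_spec i (length w)); auto.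
  apply H. unfold pat_restrict. destruct (Nat.ltb_spec i (length w)); [lia|exact Hy].
Qed.

(* Silver trees are homogeneous: replacing one piece above level [|w|] by [Z] turns
   every other piece into a translate of [Z]. *)
Lemma pat_restrict_graft Y Z w v :
  length v = length w -> pat_le Z (pat_restrict Y w) ->
  pat_restrict (graft Y (length w) Z) v = pat_act (sxor v w) Z.
Proof.
  intros Hv H. apply functional_extensionality; intro i. unfold pat_restrict, graft, pat_act.
  rewrite sbit_sxor. destruct (Nat.ltb_spec i (length v)).
  - assert (E : Z i = Some (sbit w i)).
    { apply H. unfold pat_restrict. destruct (Nat.ltb_spec i (length w)); [reflexivity|lia]. }
    rewrite E. simpl. f_equal. now destruct (sbit v i), (sbit w i).
  - destruct (Nat.ltb_spec i (length w)); [lia|].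
    rewrite (sbit_over v), (sbit_over w) by lia.
    destruct (Z i); simpl; auto. now rewrite xorb_false_r.
Qed.

Lemma pat_act_sxor_self w p : pat_act (sxor w w) p = p.
Proof.
  apply functional_extensionality; intro i. unfold pat_act. rewrite sbit_sxor, xorb_nilpotent.
  destruct (p i); simpl; auto. now rewrite xorb_false_r.
Qed.

Definition next_hole (p : pat) (n : nat) : nat :=
  epsilon (inhabits 0) (fun i => n <= i /\ p i = None).

Lemma next_hole_spec p n : silver_pat p -> n <= next_hole p n /\ p (next_hole p n) = None.
Proof. intro H. apply (epsilon_spec (inhabits 0) (fun i => n <= i /\ p i = None)), H. Qed.

Definition advance (st : state) : state :=
  fun k => (pat_of st k, S (next_hole (pat_of st k) (level st k))).

Section Fusion.

Variable P : tree -> Prop.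
Hypothesis HP : silver_forcing P.

Definition pieces_in (Y : pat) (L : nat) : Prop :=
  silver_pat Y /\ forall w, length w = L -> compat Y w -> P (pat_tree (pat_restrict Y w)).

Definition valid (st : state) : Prop := forall k, pieces_in (pat_of st k) (level st k).

Lemma piece_in_forcing st k sg w : valid st -> node st k w -> P (pat_tree (piece st k sg w)).
Proof. intros Hv [Hl Hc]. apply (forcing_act P HP), (Hv k); auto. Qed.

Lemma pieces_in_raise Y L L' : pieces_in Y L -> L <= L' -> pieces_in Y L'.
Proof.
  intros [Hs Hp] HL. split; [exact Hs|]. intros w' Hl Hc.
  set (w := firstn L w').
  assert (Hw : length w = L) by (unfold w; rewrite length_firstn; lia).
  assert (Hpre : prefix w w') by (exists (skipn L w'); unfold w; now rewrite firstn_skipn).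
  clearbody w.
  assert (Hcw : compat (pat_restrict Y w) w').
  { intros i b Hi Hq. unfold pat_restrict in Hq. destruct (Nat.ltb_spec i (length w)).
    - injection Hq as <-. destruct Hpre as [r ->]. unfold sbit. now rewrite app_nth1.
    - apply Hc; auto. }
  replace (pat_restrict Y w') with (pat_restrict (pat_restrict Y w) w').
  - apply (forcing_restrict P HP); auto. apply Hp; [exact Hw|]. eapply compat_prefix; eauto.
  - apply functional_extensionality; intro i. unfold pat_restrict.
    destruct (Nat.ltb_spec i (length w')); auto. destruct (Nat.ltb_spec i (length w)); [lia|auto].
Qed.

Lemma shrink_piece st k sg w Z :
  valid st -> node st k w -> P (pat_tree Z) -> pat_le Z (piece st k sg w) ->
  exists st', valid st' /\ shrinks st st' /\ piece st' k sg w = Z /\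
    (forall tg v, length v = level st k ->
       piece st' k tg v = pat_act tg (pat_act (sxor v w) (pat_act sg Z))) /\
    (forall k', k' <> k -> st' k' = st k').
Proof.
  intros Hv [Hl Hc] HZ Hle.
  set (Y := pat_of st k). set (Zy := pat_act sg Z).
  assert (HZy : pat_le Zy (pat_restrict Y w))
    by (unfold Zy; rewrite <- (pat_act_invol sg (pat_restrict Y w)); apply pat_le_act, Hle).
  set (st' := upd st k (graft Y (level st k) Zy, level st k)).
  assert (EY : pat_of st' k = graft Y (length w) Zy) by (unfold pat_of, st'; now rewrite upd_eq, Hl).
  assert (EL : level st' k = level st k) by (unfold level, st'; now rewrite upd_eq).
  assert (Eo : forall k', k' <> k -> st' k' = st k') by (intros; apply upd_neq; auto).
  assert (Hpieces : forall tg v, length v = level st k ->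
            piece st' k tg v = pat_act tg (pat_act (sxor v w) Zy)).
  { intros tg v Hv'. unfold piece. rewrite EY, pat_restrict_graft; auto. congruence. }
  exists st'. split; [|split; [|split; [|split]]].
  - intro k'. destruct (Nat.eq_dec k' k) as [->|Hne].
    + rewrite EY, EL. split.
      * intro n. destruct (forcing_silver_pat P HP Zy (forcing_act P HP sg Z HZ) (n + length w))
          as [i [Hi Hz]].
        exists i. split; [lia|]. unfold graft. destruct (Nat.ltb_spec i (length w)); [lia|exact Hz].
      * intros v Hv' _. rewrite pat_restrict_graft; [|congruence|exact HZy].
        apply (forcing_act P HP), (forcing_act P HP), HZ.
    + unfold pat_of, level. rewrite Eo by exact Hne. apply Hv.
  - split; [|intro k'; destruct (Nat.eq_dec k' k) as [->|Hne];
             [exact EL|unfold level; now rewrite Eo]].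
    intro k'. destruct (Nat.eq_dec k' k) as [->|Hne].
    + rewrite EY, EL. split; [lia|]. split; [apply graft_le, HZy|].
      intros i Hi. unfold graft. destruct (Nat.ltb_spec i (length w)); [reflexivity|lia].
    + unfold pat_of, level. rewrite Eo by exact Hne. apply fusion_le_refl.
  - rewrite Hpieces by exact Hl. unfold Zy. now rewrite pat_act_sxor_self, pat_act_invol.
  - exact Hpieces.
  - exact Eo.
Qed.

Lemma advance_spec st :
  valid st -> valid (advance st) /\ fusion_le st (advance st) /\
  forall k, exists i, level st k <= i < level (advance st) k /\ pat_of (advance st) k i = None.
Proof.
  intros Hv.
  assert (Hhole : forall k, level st k <= next_hole (pat_of st k) (level st k) /\
                            pat_of st k (next_hole (pat_of st k) (level st k)) = None)
    by (intro k; apply next_hole_spec, (Hv k)).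
  assert (EY : forall k, pat_of (advance st) k = pat_of st k) by reflexivity.
  assert (EL : forall k, level (advance st) k = S (next_hole (pat_of st k) (level st k)))
    by reflexivity.
  split; [|split]; intro k; rewrite ?EY, ?EL; specialize (Hhole k).
  - apply (pieces_in_raise _ (level st k)); [apply Hv|lia].
  - split; [lia|]. split; [apply pat_le_refl|reflexivity].
  - exists (next_hole (pat_of st k) (level st k)). split; [lia|apply Hhole].
Qed.

Lemma shrink_under (Hyp : Prop) (Goal : state -> Prop) st :
  valid st -> (Hyp -> exists st', valid st' /\ shrinks st st' /\ Goal st') ->
  exists st', valid st' /\ shrinks st st' /\ (Hyp -> Goal st').
Proof.
  intros Hv H. destruct (classic Hyp) as [Hh|Hn].
  - destruct (H Hh) as [st' [V [R G]]]. exists st'. auto.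
  - exists st. split; [exact Hv|]. split; [apply shrinks_refl|]. intro; contradiction.
Qed.

Definition node_covered (st : state) (k : nat) (D : tree -> Prop) (sg w : string) : Prop :=
  exists T, D T /\ subtree (pat_tree (piece st k sg w)) T.

Lemma node_covered_le st st' k D sg w :
  fusion_le st st' -> node_covered st k D sg w -> node_covered st' k D sg w.
Proof.
  intros R [T [HT Hsub]]. exists T. split; [exact HT|]. intros t Ht. apply Hsub.
  revert t Ht. apply subtree_pat_tree, piece_le, R.
Qed.

Lemma cover_step st k D sg :
  valid st -> predense P D ->
  exists st', valid st' /\ shrinks st st' /\ forall w, node st' k w -> node_covered st' k D sg w.
Proof.
  intros Hv Hpd. apply shrink_each_node; [|clear st Hv|exact Hv].
  - intros w s s' R. apply node_covered_le, R.
  - intros w st Hv Hw.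
    destruct (Hpd _ (piece_in_forcing st k sg w Hv Hw)) as [T [HT [R [HR [Hsub HsubT]]]]].
    destruct (forcing_pat P HP R HR) as [r ->].
    destruct (shrink_piece st k sg w r Hv Hw HR (proj1 (subtree_pat_tree _ _) Hsub))
      as [st' [Hv' [R' [E _]]]].
    exists st'. split; [exact Hv'|]. split; [exact R'|]. exists T. rewrite E. auto.
Qed.

Definition node_avoids (st : state) (k j : nat) (f : real -> real) (T0 : tree) (sg tg w : string)
  : Prop :=
  (forall y, matches (piece st k sg w) y -> ~ body T0 y) \/
  (forall y, matches (piece st k sg w) y -> ~ matches (pat_act tg (pat_of st j)) (f y)).

Lemma node_avoids_le st st' k j f T0 sg tg w :
  fusion_le st st' -> node_avoids st k j f T0 sg tg w -> node_avoids st' k j f T0 sg tg w.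
Proof.
  intros R [H|H]; [left|right]; intros y Hy; [|intro Hfy]; apply (H y).
  - eapply matches_le; [apply piece_le, R|exact Hy].
  - eapply matches_le; [apply piece_le, R|exact Hy].
  - eapply matches_le; [apply pat_le_act, (R j)|exact Hfy].
Qed.

Definition inside (st : state) (k : nat) (sg w : string) (T0 : tree) : Prop :=
  valid st /\ node st k w /\ forall y, matches (piece st k sg w) y -> body T0 y.

Lemma shrink_piece_restrict st k sg w s :
  valid st -> node st k w -> compat (piece st k sg w) s ->
  exists st', valid st' /\ shrinks st st' /\ piece st' k sg w = pat_restrict (piece st k sg w) s /\
    (forall tg v, length v = level st k ->
       piece st' k tg v =
       pat_act tg (pat_act (sxor v w) (pat_act sg (pat_restrict (piece st k sg w) s)))) /\
    (forall k', k' <> k -> st' k' = st k').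
Proof.
  intros Hv Hw Hs. apply shrink_piece; auto; [|apply pat_restrict_le, Hs].
  apply (forcing_restrict P HP); [exact Hs|apply piece_in_forcing; auto].
Qed.

Lemma inside_shrinks st st' k sg w T0 :
  valid st' -> shrinks st st' -> inside st k sg w T0 -> inside st' k sg w T0.
Proof.
  intros Hv' R [_ [Hw Hin]]. split; [exact Hv'|]. split; [apply (node_shrinks _ _ _ _ R), Hw|].
  intros y Hy. apply Hin. eapply matches_le; [apply piece_le, R|exact Hy].
Qed.

(* By homogeneity the piece at [v] is a translate of the piece at [w], and regularity says
   that [f] is not that translation on the piece. *)
Lemma separate_same_step st k f T0 sg tg w v :
  continuous f -> regular P T0 f -> inside st k sg w T0 -> node st k v ->
  exists st', inside st' k sg w T0 /\ shrinks st st' /\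
    image_avoids f (piece st' k sg w) (piece st' k tg v).
Proof.
  intros Hf Hreg Hin Hnv. pose proof Hin as [Hv [Hw HT0]].
  set (Z := piece st k sg w). set (pi := sxor (sxor tg (sxor v w)) sg).
  destruct (separate_image_translate f Z pi Hf) as [s [Hs Hsep]].
  { intro Htr. apply Hreg. exists (pat_tree Z), pi.
    split; [apply piece_in_forcing; auto|]. split; [apply subtree_pat_tree_body, HT0|].
    intros x Hx. apply Htr, body_pat_tree, Hx. }
  destruct (shrink_piece_restrict st k sg w s Hv Hw Hs) as [st' [Hv' [R [E1 [E2 _]]]]].
  exists st'. split; [exact (inside_shrinks st st' k sg w T0 Hv' R Hin)|]. split; [exact R|].
  rewrite E1, E2 by apply Hnv. rewrite !pat_act_act. exact Hsep.
Qed.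

Lemma separate_other_step st k j f T0 sg tg w v :
  k <> j -> continuous f -> inside st k sg w T0 -> node st j v ->
  exists st', inside st' k sg w T0 /\ shrinks st st' /\
    image_avoids f (piece st' k sg w) (piece st' j tg v).
Proof.
  intros Hkj Hf Hin Hnv. pose proof Hin as [Hv [Hw _]].
  set (Z := piece st k sg w). set (W := piece st j tg v).
  destruct (separate_image_silver f Z W Hf
              (forcing_silver_pat P HP W (piece_in_forcing st j tg v Hv Hnv)))
    as [s [s' [Hs [Hs' Hsep]]]].
  destruct (shrink_piece_restrict st k sg w s Hv Hw Hs) as [st1 [Hv1 [R1 [E1 [_ O1]]]]].
  assert (Ej : piece st1 j tg v = W) by (unfold W, piece, pat_of; now rewrite O1 by auto).
  rewrite <- Ej in Hs'.
  destruct (shrink_piece_restrict st1 j tg v s' Hv1 (proj2 (node_shrinks _ _ _ _ R1) Hnv) Hs')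
    as [st2 [Hv2 [R2 [E2 [_ O2]]]]].
  assert (Ek : piece st2 k sg w = pat_restrict Z s)
    by (unfold piece, pat_of; rewrite O2 by auto; exact E1).
  assert (R : shrinks st st2) by (eapply shrinks_trans; eauto).
  exists st2. split; [exact (inside_shrinks st st2 k sg w T0 Hv2 R Hin)|]. split; [exact R|].
  rewrite Ek, E2, Ej. exact Hsep.
Qed.

Lemma separate_step st k j f T0 sg tg :
  continuous f -> regular P T0 f -> valid st ->
  exists st', valid st' /\ shrinks st st' /\
    forall w, node st' k w -> node_avoids st' k j f T0 sg tg w.
Proof.
  intros Hf Hreg Hv. apply shrink_each_node; [|clear st Hv|exact Hv].
  - intros w s s' R. apply node_avoids_le, R.
  - intros w st Hv Hw. set (Z := piece st k sg w).
    destruct (classic (forall y, matches Z y -> body T0 y)) as [Hin|Hout].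
    + destruct (shrink_each_node (fun s => inside s k sg w T0)
                  (fun v s => image_avoids f (piece s k sg w) (piece s j tg v)) j st)
        as [st' [[Hv' [_ _]] [R Hsep]]].
      * intros v s s' R. apply image_avoids_le; apply piece_le, R.
      * intros v s Hs Hnv. destruct (Nat.eq_dec k j) as [<-|Hkj];
          [apply separate_same_step|apply separate_other_step]; auto.
      * split; [exact Hv|]. split; [exact Hw|exact Hin].
      * exists st'. split; [exact Hv'|]. split; [exact R|]. right. intros y Hy Hfy.
        destruct (matches_node st' j tg (f y) Hfy) as [v [Hnv Hz]].
        exact (Hsep v Hnv y (f y) Hy Hz eq_refl).
    + apply not_all_ex_not in Hout as [y Hy]. apply imply_to_and in Hy as [Hy Hnb].
      apply not_all_ex_not in Hnb as [n Hn].
      destruct (shrink_piece_restrict st k sg w (restr y n) Hv Hw (matches_compat _ _ _ Hy))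
        as [st' [Hv' [R [E _]]]].
      exists st'. split; [exact Hv'|]. split; [exact R|]. left. intros y' Hy' Hb.
      rewrite E in Hy'. apply matches_restrict in Hy' as [_ Hr]; [|apply matches_compat, Hy].
      rewrite length_restr in Hr. apply Hn. rewrite <- Hr. apply Hb.
Qed.

End Fusion.

(** * The fusion construction *)

Fixpoint string_of_pos (p : positive) : string :=
  match p with
  | xH => []
  | xO q => false :: string_of_pos q
  | xI q => true :: string_of_pos q
  end.

Fixpoint pos_of_string (s : string) : positive :=
  match s with
  | [] => xH
  | false :: s => xO (pos_of_string s)
  | true :: s => xI (pos_of_string s)
  end.

Definition string_of_nat (n : nat) : string := string_of_pos (Pos.of_nat n).

Lemma string_of_nat_surj s : exists n, string_of_nat n = s.
Proof.
  exists (Pos.to_nat (pos_of_string s)). unfold string_of_nat. rewrite Pos2Nat.id.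
  induction s as [|[] s IH]; simpl; congruence.
Qed.

(* At a stage with task [t], the pieces of sequence [t_node] translated by [t_sg] are
   covered by [Ds t_dense] and separated, through [Fs t_fun], from those of sequence
   [t_other] translated by [t_tg], relative to [Xs t_tree]. *)
Record task := Task {
  t_node : nat; t_other : nat; t_dense : nat; t_fun : nat; t_tree : nat;
  t_sg : string; t_tg : string }.

Definition task_of_nat (n : nat) : task :=
  let '(k, n) := of_nat n in let '(j, n) := of_nat n in let '(d, n) := of_nat n in
  let '(a, n) := of_nat n in let '(b, n) := of_nat n in let '(c, e) := of_nat n in
  Task k j d a b (string_of_nat c) (string_of_nat e).

Lemma task_of_nat_surj t : exists n, task_of_nat n = t.
Proof.
  destruct t as [k j d a b sg tg].
  destruct (string_of_nat_surj sg) as [c <-], (string_of_nat_surj tg) as [e <-].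
  exists (to_nat (k, to_nat (j, to_nat (d, to_nat (a, to_nat (b, to_nat (c, e))))))).
  unfold task_of_nat. now rewrite !cancel_of_to.
Qed.

Lemma finite_choice {A B : Type} (C : A -> Prop) (D : B -> Prop) (R : A -> B -> Prop)
  (ws : list A) :
  (forall w, In w ws -> C w -> exists T, D T /\ R w T) ->
  exists l, (forall T, In T l -> D T) /\ forall w, In w ws -> C w -> exists T, In T l /\ R w T.
Proof.
  induction ws as [|w ws IH]; intros H.
  - exists []. split; [intros T []|intros w []].
  - destruct IH as [l [H1 H2]]; [intros; apply H; simpl; auto|].
    destruct (classic (C w)) as [Cw|nCw].
    + destruct (H w (or_introl eq_refl) Cw) as [T [DT RT]]. exists (T :: l). split.
      * intros T' [<-|Hin]; auto.
      * intros w' [<-|Hin] Cw'; [exists T; simpl; auto|].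
        destruct (H2 w' Hin Cw') as [T' [HT' RT']]. exists T'. simpl. auto.
    + exists l. split; [exact H1|]. intros w' [<-|Hin] Cw'; [contradiction|auto].
Qed.

Section Construction.

Variable P : tree -> Prop.
Hypothesis HP : silver_forcing P.
Variable Xs : nat -> tree.
Hypothesis HXs : forall n, P (Xs n).
Hypothesis HXsurj : forall T, P T -> exists n, Xs n = T.
Variable Ds : nat -> (tree -> Prop).
Variable Fs : nat -> (real -> real).

Definition stage_done (t : task) (st st' : state) : Prop :=
  (forall k, exists i, level st k <= i < level st' k /\ pat_of st' k i = None) /\
  (predense P (Ds (t_dense t)) -> forall w, node st' (t_node t) w ->
     node_covered st' (t_node t) (Ds (t_dense t)) (t_sg t) w) /\
  (continuous (Fs (t_fun t)) -> regular P (Xs (t_tree t)) (Fs (t_fun t)) ->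
     forall w, node st' (t_node t) w ->
     node_avoids st' (t_node t) (t_other t) (Fs (t_fun t)) (Xs (t_tree t)) (t_sg t) (t_tg t) w).

Lemma stage_exists t st :
  valid P st -> exists st', valid P st' /\ fusion_le st st' /\ stage_done t st st'.
Proof.
  intros Hv. destruct (advance_spec P HP st Hv) as [Hv1 [R1 Hholes]].
  destruct (shrink_under P _ _ (advance st) Hv1
              (cover_step P HP (advance st) (t_node t) (Ds (t_dense t)) (t_sg t) Hv1))
    as [st2 [Hv2 [R2 Hcov]]].
  destruct (shrink_under P _ _ st2 Hv2
              (fun H => separate_step P HP st2 (t_node t) (t_other t) (Fs (t_fun t))
                          (Xs (t_tree t)) (t_sg t) (t_tg t) (proj1 H) (proj2 H) Hv2))
    as [st3 [Hv3 [R3 Hsep]]].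
  assert (R13 : shrinks (advance st) st3) by (eapply shrinks_trans; eauto).
  exists st3. split; [exact Hv3|]. split; [eapply fusion_le_trans; [exact R1|apply R13]|].
  split; [|split].
  - intro k. destruct (Hholes k) as [i [Hi Hhole]]. exists i.
    rewrite (proj2 R13 k), (proj2 (proj2 (proj1 R13 k))) by lia. auto.
  - intros Hpd w Hw. apply (node_covered_le st2); [apply R3|].
    apply Hcov; [exact Hpd|]. apply (node_shrinks _ _ _ _ R3), Hw.
  - intros Hf Hreg. apply Hsep. auto.
Qed.

Definition next_state (t : task) (st : state) : state :=
  epsilon (inhabits st) (fun st' => valid P st' /\ fusion_le st st' /\ stage_done t st st').

Definition initial_pat (k : nat) : pat :=
  epsilon (inhabits (fun _ => None)) (fun p => Xs k = pat_tree p).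

Lemma initial_pat_spec k : Xs k = pat_tree (initial_pat k).
Proof.
  apply (epsilon_spec _ (fun p => Xs k = pat_tree p)), (forcing_pat P HP), HXs.
Qed.

Fixpoint fusion (m : nat) : state :=
  match m with
  | 0 => fun k => (initial_pat k, 0)
  | S m => next_state (task_of_nat m) (fusion m)
  end.

Lemma next_state_spec t st :
  valid P st ->
  valid P (next_state t st) /\ fusion_le st (next_state t st) /\ stage_done t st (next_state t st).
Proof.
  intro Hv. exact (epsilon_spec (inhabits st)
    (fun st' => valid P st' /\ fusion_le st st' /\ stage_done t st st') (stage_exists t st Hv)).
Qed.

Lemma fusion_valid m : valid P (fusion m).
Proof.
  induction m as [|m IH]; [|apply next_state_spec, IH].
  intro k. split; [apply (forcing_silver_pat P HP); rewrite <- initial_pat_spec; apply HXs|].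
  intros [|] Hw _; [|discriminate]. rewrite pat_restrict_nil, <- initial_pat_spec. apply HXs.
Qed.

Lemma fusion_step m :
  fusion_le (fusion m) (fusion (S m)) /\ stage_done (task_of_nat m) (fusion m) (fusion (S m)).
Proof. apply next_state_spec, fusion_valid. Qed.

Lemma fusion_mono m m' : m <= m' -> fusion_le (fusion m) (fusion m').
Proof.
  induction 1 as [|m' _ IH]; [apply fusion_le_refl|].
  eapply fusion_le_trans; [exact IH|apply fusion_step].
Qed.

Lemma stage_of_task t : exists m, stage_done t (fusion m) (fusion (S m)).
Proof. destruct (task_of_nat_surj t) as [m <-]. exists m. apply fusion_step. Qed.

Lemma fusion_level m k : m <= level (fusion m) k.
Proof.
  induction m as [|m IH]; [lia|].
  destruct (proj1 (proj2 (fusion_step m)) k) as [i [Hi _]]. lia.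
Qed.

(* Every stage raises every level, so position [i] is frozen from stage [S i] on. *)
Definition limit (k : nat) : pat := fun i => pat_of (fusion (S i)) k i.

Lemma limit_stable k m i : i < level (fusion m) k -> limit k i = pat_of (fusion m) k i.
Proof.
  intro Hi. unfold limit. destruct (Nat.le_ge_cases m (S i)) as [Hm|Hm].
  - apply (fusion_mono _ _ Hm k), Hi.
  - symmetry. apply (fusion_mono _ _ Hm k). pose proof (fusion_level (S i) k). lia.
Qed.

Lemma limit_le k m : pat_le (limit k) (pat_of (fusion m) k).
Proof.
  intros i b Hb. set (m' := Nat.max m (S i)).
  rewrite (limit_stable k m') by (pose proof (fusion_level m' k); lia).
  apply (fusion_mono m m' (Nat.le_max_l _ _) k), Hb.
Qed.

Lemma limit_silver k : silver_pat (limit k).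
Proof.
  intro N. destruct (proj1 (proj2 (fusion_step N)) k) as [i [Hi Hhole]].
  pose proof (fusion_level N k). exists i. split; [lia|].
  rewrite (limit_stable k (S N)) by lia. exact Hhole.
Qed.

Definition limit_forcing (T : tree) : Prop :=
  exists k sg w, compat (limit k) w /\ T = pat_tree (pat_act sg (pat_restrict (limit k) w)).

Lemma limit_forcing_le k sg w m :
  compat (limit k) w ->
  pat_le (pat_act sg (pat_restrict (limit k) w)) (pat_act sg (pat_of (fusion m) k)).
Proof.
  intro Hw. apply pat_le_act. eapply pat_le_trans; [apply pat_restrict_le, Hw|apply limit_le].
Qed.

Lemma limit_forcing_silver : silver_forcing limit_forcing.
Proof.
  split; [|split].
  - intros T [k [sg [w [_ ->]]]].
    apply pat_is_silver, silver_pat_act, silver_pat_restrict, limit_silver.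
  - intros T u [k [sg [w [Hw ->]]]] Hu.
    rewrite <- pat_tree_restrict by exact Hu. rewrite pat_restrict_act.
    destruct (pat_restrict_restrict (limit k) w (act_string sg u) Hw) as [w' [Hw' E]];
      [apply compat_act, Hu|].
    exists k, sg, w'. split; [exact Hw'|]. now rewrite E.
  - intros T s [k [sg [w [Hw ->]]]]. rewrite <- pat_tree_act, pat_act_act.
    exists k, (sxor s sg), w. auto.
Qed.

Lemma limit_forcing_countable : countable_trees limit_forcing.
Proof.
  exists (fun n => let '(k, r) := of_nat n in let '(a, b) := of_nat r in
            pat_tree (pat_act (string_of_nat a) (pat_restrict (limit k) (string_of_nat b)))).
  intros T [k [sg [w [_ ->]]]].
  destruct (string_of_nat_surj sg) as [a <-], (string_of_nat_surj w) as [b <-].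
  exists (to_nat (k, to_nat (a, b))). now rewrite !cancel_of_to.
Qed.

Lemma limit_forcing_dense T : limit_forcing T \/ P T -> exists U, limit_forcing U /\ subtree U T.
Proof.
  intros [HQ|HT]; [exists T; split; [exact HQ|intros t Ht; exact Ht]|].
  destruct (HXsurj T HT) as [n <-]. exists (pat_tree (limit n)). split.
  - exists n, [], []. split; [intros i b Hi; simpl in Hi; lia|].
    now rewrite pat_restrict_nil, pat_act_nil.
  - rewrite initial_pat_spec. apply subtree_pat_tree, (limit_le n 0).
Qed.

Lemma limit_forcing_cover d U :
  predense P (Ds d) -> limit_forcing U ->
  exists D' : list tree,
    (forall T, In T D' -> Ds d T) /\ (forall t, U t -> exists T, In T D' /\ T t).
Proof.
  intros Hpd [k [sg [w [Hw ->]]]].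
  destruct (stage_of_task (Task k 0 d 0 0 sg [])) as [m [_ [Hcov _]]].
  cbn [t_node t_dense t_sg] in Hcov.
  set (st := fusion (S m)) in *.
  destruct (finite_choice (node st k) (Ds d) (fun v T => subtree (pat_tree (piece st k sg v)) T)
              (all_strings (level st k))) as [l [Hl Hcover]];
    [intros v _ Hv; apply Hcov; auto|].
  exists l. split; [exact Hl|]. intros t Ht. apply pat_tree_iff in Ht as [x [Hx <-]].
  destruct (matches_node st k sg x) as [v [Hv Hxv]];
    [eapply matches_le; [apply limit_forcing_le, Hw|exact Hx]|].
  destruct (Hcover v) as [T [HT Hsub]]; [rewrite <- (proj1 Hv); apply in_all_strings|exact Hv|].
  exists T. split; [exact HT|]. apply Hsub, matches_compat, Hxv.
Qed.

Lemma limit_forcing_separate a b U V :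
  continuous (Fs a) -> regular P (Xs b) (Fs a) -> limit_forcing U -> limit_forcing V ->
  subtree U (Xs b) -> forall x, body U x -> ~ body V (Fs a x).
Proof.
  intros Hf Hreg [k [sg [w [Hw ->]]]] [j [tg [v [Hv ->]]]] Hsub x Hx Hfx.
  destruct (stage_of_task (Task k j 0 a b sg tg)) as [m [_ [_ Hsep]]].
  cbn [t_node t_other t_fun t_tree t_sg t_tg] in Hsep.
  set (st := fusion (S m)) in *.
  apply body_pat_tree in Hx, Hfx.
  destruct (matches_node st k sg x) as [w' [Hw' Hxw]];
    [eapply matches_le; [apply limit_forcing_le, Hw|exact Hx]|].
  destruct (Hsep Hf Hreg w' Hw') as [Hout|Hfar].
  - apply (Hout x Hxw). intro n. apply Hsub, matches_compat, Hx.
  - apply (Hfar x Hxw). eapply matches_le; [apply limit_forcing_le, Hv|exact Hfx].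
Qed.

End Construction.

Theorem theorem8p3 :
  forall (M : structure) (P : tree -> Prop),
    ctm_ZFCprime M ->
    silver_forcing P ->
    in_model M (codes_treeset M) P ->
    exists Q : tree -> Prop,
      silver_forcing Q /\ countable_trees Q /\ sqsubset M P Q.
Proof.
  intros M P HM HP HPM.
  destruct (classic (exists T, P T)) as [[T0 HT0]|Hempty].
  - destruct (enumerate_coded_forcing M HM P T0 HPM HT0) as [Xs [HXs HXsurj]].
    destruct (enumerate_coded_sets M HM) as [Ds HDs].
    destruct (enumerate_coded_functions M HM) as [Fs HFs].
    exists (limit_forcing P Xs Ds Fs).
    split; [apply limit_forcing_silver; auto|]. split; [apply limit_forcing_countable|].
    split; [|split].
    + apply limit_forcing_dense; auto.
    + intros D HD _ Hpd U HU. destruct (HDs D HD) as [d <-]. eapply limit_forcing_cover; eauto.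
    + intros T f HT Hf Hcode Hreg U V HU HV Hsub x Hx.
      destruct (HXsurj T HT) as [b <-]. destruct (HFs f Hf Hcode) as [a <-].
      exact (limit_forcing_separate P HP Xs HXs Ds Fs a b U V Hf Hreg HU HV Hsub x Hx).
  - exists (fun _ => False). split; [|split; [|split; [|split]]].
    + split; [intros T []|split; [intros T u []|intros T s []]].
    + exists (fun _ _ => False). intros T [].
    + intros T [[]|HT]. exfalso. eauto.
    + intros D _ _ _ U [].
    + intros T f HT. exfalso. eauto.
Qed.
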